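(* Let $n\ge 1$. An element $A=(A_1,\dots,A_n)\in V_n$ is similar to an upper triangular $n$-matrix if and only if for all triples $1\le j,k,l\le n$, the triple $(A_j,A_k,A_l)\in V_3$ is similar to an upper triangular $3$-matrix.
   Context: $V_n=(M_{2\times2}(\mathbb{C}))^{\times n}$ with $GL(2,\mathbb{C})$ acting by simultaneous conjugation $g\cdot A=(gA_1g^{-1},\dots,gA_ng^{-1})$; two elements are similar if they lie in the same orbit. An $n$-matrix $A$ is upper triangular if every component $A_j$ is an upper triangular matrix. *)

From HB Require Import structures.
From mathcomp Require Import all_boot all_order all_algebra.
From mathcomp Require Import complex.
From mathcomp Require Import Rstruct.
Set Implicit Arguments. Unset Strict Implicit. Unset Printing Implicit Defensive.
Import Order.TTheory GRing.Theory Num.Theory.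
Local Open Scope ring_scope.

Definition CC : Type := complex Rdefinitions.R.

(* An n-matrix: an element of V_n = (M_2(C))^n. *)
Definition nmatrix (n : nat) := 'I_n -> 'M[CC]_2.

Definition upper_tri (M : 'M[CC]_2) : Prop :=
  forall i j : 'I_2, (j < i)%N -> M i j = 0.

Definition upper_tri_n (n : nat) (A : nmatrix n) : Prop :=
  forall j, upper_tri (A j).

Definition conj_n (n : nat) (g : 'M[CC]_2) (A : nmatrix n) : nmatrix n :=
  fun j => g *m A j *m invmx g.

Definition similar_to_upper (n : nat) (A : nmatrix n) : Prop :=
  exists g : 'M[CC]_2, g \in unitmx /\ upper_tri_n (conj_n g A).

Definition triple (a b c : 'M[CC]_2) : nmatrix 3 :=
  fun i => if val i == 0%N then a else if val i == 1%N then b else c.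

(* A nonzero v = (x, y) is an eigenvector of a 2x2 matrix M iff det (M v, v) = 0,
   and this determinant is a binary quadratic form in v.  A tuple is similar to
   an upper triangular one iff its components have a common eigenvector (the
   first column of the inverse of the conjugating matrix).  A binary quadratic
   form with three pairwise non-proportional roots vanishes identically, by
   Lagrange interpolation.  So if the components had no common eigenvector,
   take a with A_a not scalar, an eigenvector v2 of A_a, some b for which v2 is
   not an eigenvector, a common eigenvector v3 of A_a and A_b, some c for which
   v3 is not one, and a common eigenvector v4 of A_a, A_b, A_c: then v2, v3, v4
   are pairwise non-proportional eigenvectors of A_a, which is absurd. *)

From mathcomp Require Import all_boot all_order all_algebra.
From mathcomp Require Import ring complex Rstruct.
Set Implicit Arguments. Unset Strict Implicit. Unset Printing Implicit Defensive.
Import GRing.Theory.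
Local Open Scope ring_scope.

Lemma sum_ord2 (V : nmodType) (F : 'I_2 -> V) : \sum_i F i = F 0 + F 1.
Proof. by rewrite big_ord_recl big_ord1; congr (_ + F _); apply: val_inj. Qed.

Section Matrix2.
Variable R : comPzRingType.

Definition mx2 (a b c d : R) : 'M[R]_2 :=
  \matrix_(i, j) if i == 0 then (if j == 0 then a else b) else (if j == 0 then c else d).

Lemma mulmx2E (M N : 'M[R]_2) i j : (M *m N) i j = M i 0 * N 0 j + M i 1 * N 1 j.
Proof. by rewrite mxE sum_ord2. Qed.

Lemma det_mx2 (M : 'M[R]_2) : \det M = M 0 0 * M 1 1 - M 0 1 * M 1 0.
Proof.
rewrite (expand_det_row _ 0) sum_ord2 /cofactor !det_mx11 !mxE /=.
have -> : lift 0 0 = 1 :> 'I_2 by apply: val_inj.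
have -> : lift 1 0 = 0 :> 'I_2 by apply: val_inj.
by rewrite expr0 expr1 mul1r mulN1r mulrN.
Qed.

End Matrix2.

Section BinaryQuadraticForms.
Variable R : comPzRingType.

Definition binform (a b c x y : R) := a * x ^+ 2 + b * (x * y) + c * y ^+ 2.

Definition cross (x1 y1 x2 y2 : R) := x1 * y2 - x2 * y1.

(* Cramer's rule for the coefficients (a, b, c): the determinant of the rows
   (x_i^2, x_i y_i, y_i^2), i = 1, 2, 3, is the product of their cross products. *)
Lemma binform_lagrange (a b c x1 y1 x2 y2 x3 y3 x y : R) :
  binform a b c x y * (cross x1 y1 x2 y2 * cross x1 y1 x3 y3 * cross x2 y2 x3 y3) =
    cross x y x2 y2 * cross x y x3 y3 * cross x2 y2 x3 y3 * binform a b c x1 y1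
  + cross x1 y1 x y * cross x1 y1 x3 y3 * cross x y x3 y3 * binform a b c x2 y2
  + cross x1 y1 x2 y2 * cross x1 y1 x y * cross x2 y2 x y * binform a b c x3 y3.
Proof. rewrite /binform /cross; ring. Qed.

End BinaryQuadraticForms.

Section BinaryQuadraticFormsField.
Variable F : fieldType.

Lemma binform_eq0_of_three_roots (a b c x1 y1 x2 y2 x3 y3 : F) :
  binform a b c x1 y1 = 0 -> binform a b c x2 y2 = 0 -> binform a b c x3 y3 = 0 ->
  cross x1 y1 x2 y2 != 0 -> cross x1 y1 x3 y3 != 0 -> cross x2 y2 x3 y3 != 0 ->
  forall x y, binform a b c x y = 0.
Proof.
move=> q1 q2 q3 c12 c13 c23 x y.
have := binform_lagrange a b c x1 y1 x2 y2 x3 y3 x y.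
rewrite q1 q2 q3 !mulr0 !addr0 => /eqP.
by rewrite mulf_eq0 (negPf (mulf_neq0 (mulf_neq0 c12 c13) c23)) orbF => /eqP.
Qed.

Lemma cross_neq0_of_binform (a b c x1 y1 x2 y2 : F) :
  (x2 != 0) || (y2 != 0) -> binform a b c x2 y2 = 0 -> binform a b c x1 y1 != 0 ->
  cross x1 y1 x2 y2 != 0.
Proof.
move=> nz2 q2; apply: contraNneq => c12.
have hx : x2 ^+ 2 * binform a b c x1 y1 =
    x1 ^+ 2 * binform a b c x2 y2 - cross x1 y1 x2 y2 * (b * x1 * x2 + c * (x1 * y2 + x2 * y1)).
  by rewrite /binform /cross; ring.
have hy : y2 ^+ 2 * binform a b c x1 y1 =
    y1 ^+ 2 * binform a b c x2 y2 + cross x1 y1 x2 y2 * (a * (x1 * y2 + x2 * y1) + b * y1 * y2).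
  by rewrite /binform /cross; ring.
rewrite q2 c12 mulr0 mul0r subr0 in hx; rewrite q2 c12 mulr0 !mul0r addr0 in hy.
by case/orP: nz2 => nz; [move/eqP: hx | move/eqP: hy];
  rewrite mulf_eq0 expf_eq0 (negPf nz) andbF.
Qed.

End BinaryQuadraticFormsField.

Section EigenForm.
Variable R : comPzRingType.

(* [eigen_form M x y] is the determinant of the vectors M (x, y) and (x, y)
   (lemma eigen_form_crossE), so a nonzero (x, y) is an eigenvector of M
   iff it is a root of this binary quadratic form. *)
Definition eigen_form (M : 'M[R]_2) : R -> R -> R :=
  binform (- M 1 0) (M 0 0 - M 1 1) (M 0 1).

Lemma eigen_form_crossE (M : 'M[R]_2) x y :
  eigen_form M x y = cross (M 0 0 * x + M 0 1 * y) (M 1 0 * x + M 1 1 * y) x y.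
Proof. rewrite /eigen_form /binform /cross; ring. Qed.

End EigenForm.

Section Conjugation.
Variable R : comUnitRingType.

Lemma det_mul_conjmx10 (h M : 'M[R]_2) : h \in unitmx ->
  \det h * (invmx h *m M *m h) 1 0 = - eigen_form M (h 0 0) (h 1 0).
Proof.
move=> hu; set T := invmx h *m M *m h.
have hT : h *m T = M *m h by rewrite /T !mulmxA mulmxV // mul1mx.
clearbody T.
have hT0 := congr1 (fun N : 'M_2 => N 0 0) hT.
have hT1 := congr1 (fun N : 'M_2 => N 1 0) hT.
rewrite /= !mulmx2E in hT0 hT1.
rewrite eigen_form_crossE /cross -hT0 -hT1 det_mx2; ring.
Qed.

Lemma unitmx2_col0_neq0 (h : 'M[R]_2) : h \in unitmx -> (h 0 0 != 0) || (h 1 0 != 0).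
Proof.
rewrite unitmxE det_mx2; apply: contraTT; rewrite negb_or !negbK.
by case/andP=> /eqP-> /eqP->; rewrite mul0r mulr0 subrr unitr0.
Qed.

End Conjugation.

Section CommonEigenvector.
Variable F : fieldType.

Lemma unitmx2_with_col0 (x y : F) : (x != 0) || (y != 0) ->
  exists2 h : 'M[F]_2, h \in unitmx & h 0 0 = x /\ h 1 0 = y.
Proof.
have [-> | yn0] := eqVneq y 0; rewrite ?eqxx ?orbF => nz.
  exists (mx2 x 0 0 1); last by rewrite !mxE.
  by rewrite unitmxE det_mx2 !mxE /= mulr1 mulr0 subr0 unitfE.
exists (mx2 x (-1) y 0); last by rewrite !mxE.
by rewrite unitmxE det_mx2 !mxE /= mulr0 mulN1r sub0r opprK unitfE.
Qed.

Definition common_eigenvector (I : Type) (A : I -> 'M[F]_2) :=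
  exists x y, ((x != 0) || (y != 0)) /\ forall i, eigen_form (A i) x y = 0.

Lemma common_eigenvector_or_nonroot (I : finType) (A : I -> 'M[F]_2) x y :
  (x != 0) || (y != 0) -> common_eigenvector A \/ exists i, eigen_form (A i) x y != 0.
Proof.
move=> nz; case: (boolP [forall i, eigen_form (A i) x y == 0]) => [/forallP E | ].
  by left; exists x, y; split=> // i; apply/eqP.
by rewrite negb_forall => /existsP; right.
Qed.

Lemma common_eigenvector_of_triples (I : finType) (A : I -> 'M[F]_2) :
  (forall j k l, exists x y, ((x != 0) || (y != 0)) /\
     [/\ eigen_form (A j) x y = 0, eigen_form (A k) x y = 0 & eigen_form (A l) x y = 0]) ->
  common_eigenvector A.
Proof.
move=> triples.
(* (1, 0) only serves to find an [a] whose eigen form is not identically zero. *)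
have nz1 : (1 != 0 :> F) || (0 != 0 :> F) by rewrite oner_neq0.
have [// | [a na]] := common_eigenvector_or_nonroot A nz1.
have [x2 [y2 [nz2 [a2 _ _]]]] := triples a a a.
have [// | [b nb2]] := common_eigenvector_or_nonroot A nz2.
have [x3 [y3 [nz3 [a3 b3 _]]]] := triples a b b.
have [// | [c nc3]] := common_eigenvector_or_nonroot A nz3.
have [x4 [y4 [nz4 [a4 b4 c4]]]] := triples a b c.
case/eqP: na; apply: (binform_eq0_of_three_roots a2 a3 a4).
- exact: cross_neq0_of_binform nz3 b3 nb2.
- exact: cross_neq0_of_binform nz4 b4 nb2.
- exact: cross_neq0_of_binform nz4 c4 nc3.
Qed.

End CommonEigenvector.

Lemma upper_triE (M : 'M[CC]_2) : upper_tri M <-> M 1 0 = 0.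
Proof.
split=> [upM | M10]; first exact: upM.
case=> [[|[|i]] //= lti] [[|j] //= ltj] _.
by rewrite -M10; congr (M _ _); apply: val_inj.
Qed.

Lemma similar_to_upperP n (A : nmatrix n) : similar_to_upper A <-> common_eigenvector A.
Proof.
split=> [[g [gu upA]] | [x [y [nz eigA]]]].
  have hu : invmx g \in unitmx by rewrite unitmx_inv.
  exists (invmx g 0 0), (invmx g 1 0); split=> [|j]; first exact: unitmx2_col0_neq0.
  have := det_mul_conjmx10 (A j) hu; rewrite invmxK.
  by move/upper_triE: (upA j) => /= ->; rewrite mulr0 => /esym/eqP; rewrite oppr_eq0 => /eqP.
have [h hu [h00 h10]] := unitmx2_with_col0 nz.
exists (invmx h); split=> [|j]; first by rewrite unitmx_inv.
apply/upper_triE; rewrite /conj_n invmxK.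
have deth : \det h != 0 by rewrite -unitfE -unitmxE.
have := det_mul_conjmx10 (A j) hu; rewrite h00 h10 eigA oppr0 => /eqP.
by rewrite mulf_eq0 (negPf deth) => /eqP.
Qed.

Lemma similar_to_upper_triple n (A : nmatrix n) j k l :
  similar_to_upper A -> similar_to_upper (triple (A j) (A k) (A l)).
Proof.
case=> g [gu upA]; exists g; split=> // i; rewrite /conj_n /triple.
by do 2?case: ifP => _; apply: upA.
Qed.

Theorem theorem2p7 (n : nat) (hn : (1 <= n)%N) (A : nmatrix n) :
  similar_to_upper A <->
  (forall j k l : 'I_n, similar_to_upper (triple (A j) (A k) (A l))).
Proof.
split=> [simA j k l | simT]; first exact: similar_to_upper_triple.
apply/similar_to_upperP/common_eigenvector_of_triples => j k l.
have [x [y [nz eigT]]] := (similar_to_upperP _).1 (simT j k l).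
exists x, y; split=> //.
by split; [exact (eigT (@Ordinal 3 0 isT)) | exact (eigT (@Ordinal 3 1 isT))
          | exact (eigT (@Ordinal 3 2 isT))].
Qed.
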